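(* Let $N\ge1$, $0<\lambda\le\Lambda$, assume $\beta=\frac{\Lambda}{\lambda}(N-1)+1>2$, and let $q>1$. Let $u:\mathbb{R}^N\to[0,\infty)$ be a nonnegative viscosity solution of $\mathcal{M}^+_{\lambda,\Lambda}(D^2u)\ge u^q$ in $\mathbb{R}^N$, and set $m(R)=\min_{|x|\le R}u(x)$. Then there exists a constant $C>0$ such that $$m(R)\le C R^{-\frac{2}{q-1}}\quad\text{for all }R>0.$$
   Context: For $M\in\mathrm{Sym}_N$ with eigenvalues $e_1,\dots,e_N$, $\mathcal{M}^+_{\lambda,\Lambda}(M)=\sup_{\lambda I_N\le A\le\Lambda I_N}(-\mathrm{Tr}(AM))=-\lambda\sum_{e_k>0}e_k-\Lambda\sum_{e_k<0}e_k$. A viscosity solution of an inequality $G(x,u,Du,D^2u)\ge 0$ in an open set $\Omega$ is a lower semicontinuous $u$ such that for every $x_0\in\Omega$ and every $\varphi\in C^2$ for which $u-\varphi$ has a local minimum at $x_0$, $G(x_0,u(x_0),D\varphi(x_0),D^2\varphi(x_0))\ge0$. *)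

From HB Require Import structures.
From mathcomp Require Import all_boot all_order all_algebra.
From mathcomp Require Import all_classical all_reals all_analysis.
Set Implicit Arguments. Unset Strict Implicit. Unset Printing Implicit Defensive.
Import Order.TTheory GRing.Theory Num.Theory.
Import numFieldNormedType.Exports.
Local Open Scope classical_set_scope.
Local Open Scope ring_scope.

Section Defs.
Variables (R : realType) (N : nat).

Definition enorm (x : 'rV[R]_N) : R := Num.sqrt (\sum_(i < N) x 0 i ^+ 2).

Definition qform (A : 'M[R]_N) (v : 'rV[R]_N) : R := (v *m A *m v^T) 0 0.

Definition symmetric (M : 'M[R]_N) : Prop := M^T = M.

Definition pucci_admissible (lam Lam : R) (A : 'M[R]_N) : Prop :=
  symmetric A /\ forall v : 'rV[R]_N,
    lam * qform 1%:M v <= qform A v /\ qform A v <= Lam * qform 1%:M v.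

Definition pucci_max (lam Lam : R) (M : 'M[R]_N) : R :=
  sup [set - \tr (A *m M) | A in pucci_admissible lam Lam].

Definition ebasis (i : 'I_N) : 'rV[R]_N := delta_mx 0 i.
Definition partial (i : 'I_N) (f : 'rV[R]_N -> R) (x : 'rV[R]_N) : R :=
  'D_(ebasis i) f x.

Definition C2 (phi : 'rV[R]_N -> R) : Prop :=
  continuous phi /\
  (forall i, (forall x, derivable phi x (ebasis i)) /\ continuous (partial i phi)) /\
  (forall i j, (forall x, derivable (partial i phi) x (ebasis j)) /\
               continuous (partial j (partial i phi))).

Definition hessian (phi : 'rV[R]_N -> R) (x : 'rV[R]_N) : 'M[R]_N :=
  \matrix_(i, j) partial j (partial i phi) x.

Definition lsc (u : 'rV[R]_N -> R) : Prop :=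
  forall x0 (e : R), 0 < e -> \forall x \near x0, u x0 - e < u x.

Definition visc_supersol_pucci (lam Lam q : R) (u : 'rV[R]_N -> R) : Prop :=
  lsc u /\
  forall (x0 : 'rV[R]_N) (phi : 'rV[R]_N -> R), C2 phi ->
    (\forall x \near x0, u x0 - phi x0 <= u x - phi x) ->
    pucci_max lam Lam (hessian phi x0) - (u x0) `^ q >= 0.

(* m(R) = min_{|x| <= R} u(x) (as an infimum; attained for lsc u) *)
Definition minball (u : 'rV[R]_N -> R) (r : R) : R :=
  inf [set u x | x in [set x | enorm x <= r]].

End Defs.

From HB Require Import structures.
From mathcomp Require Import all_boot all_order all_algebra.
From mathcomp Require Import all_classical all_reals all_analysis.
From mathcomp Require Import ring lra.
Set Implicit Arguments. Unset Strict Implicit. Unset Printing Implicit Defensive.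
Import Order.TTheory GRing.Theory Num.Theory.
Import numFieldNormedType.Exports.
Local Open Scope classical_set_scope.
Local Open Scope ring_scope.

(* Fix r > 0 with m := m(r) > 0 and touch u from below by the concave
   paraboloid phi(x) = 4m - (m / r^2) |x|^2.  The function u - phi is lower
   semicontinuous, bounded below, negative somewhere in B_r and nonnegative
   outside B_{2r}; hence it attains a global minimum at a point p with
   |p| <= 2r.  Since D^2 phi = -(2m / r^2) I, the viscosity inequality at p
   and the bound M^+(-kI) <= k Lam N give m(2r)^q <= u(p)^q <= 2 Lam N m / r^2.
   An elementary induction over dyadic scales turns this one-step estimate
   into m(r) <= C r^(-2/(q-1)). *)

Section EuclideanNorm.
Variables (R : realType) (N : nat).

Definition sqnorm (x : 'rV[R]_N) : R := \sum_i x 0 i ^+ 2.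

Lemma sqnorm_ge0 (x : 'rV[R]_N) : 0 <= sqnorm x.
Proof. by rewrite sumr_ge0 // => i _; rewrite sqr_ge0. Qed.

Lemma coord_le_sqnorm (x : 'rV[R]_N) i : x 0 i ^+ 2 <= sqnorm x.
Proof. by rewrite /sqnorm (bigD1 i) //= lerDl sumr_ge0 // => j _; rewrite sqr_ge0. Qed.

Lemma enorm_le (x : 'rV[R]_N) (r : R) : 0 <= r -> (enorm x <= r) = (sqnorm x <= r ^+ 2).
Proof.
by move=> r0; rewrite /enorm -[X in _ <= X](ger0_norm r0) -sqrtr_sqr ler_sqrt ?sqr_ge0.
Qed.

Lemma enorm0 : enorm (0 : 'rV[R]_N) = 0.
Proof. by rewrite /enorm big1 ?sqrtr0 // => i _; rewrite mxE expr0n. Qed.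

End EuclideanNorm.

Section PucciScalar.
Variables (R : realType) (N : nat).

Lemma qform1E (v : 'rV[R]_N) : qform 1%:M v = sqnorm v.
Proof. by rewrite /qform mulmx1 !mxE; apply: eq_bigr => i _; rewrite !mxE expr2. Qed.

Lemma qform_delta (A : 'M[R]_N) i : qform A (delta_mx 0 i) = A i i.
Proof. by rewrite /qform -rowE trmx_delta -colE !mxE. Qed.

Lemma qform_scalar (a : R) (v : 'rV[R]_N) : qform a%:M v = a * qform 1%:M v.
Proof. by rewrite /qform mul_mx_scalar -scalemxAl mxE mulmx1. Qed.

(* M^+(-kI) <= k Lam N for k >= 0: every admissible A has diagonal entries at
   most Lam, so -Tr(A (-kI)) = k Tr A <= k Lam N; lam I is admissible. *)
Lemma pucci_max_scalar_le (lam Lam k : R) :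
  lam <= Lam -> 0 <= k -> pucci_max lam Lam ((- k)%:M : 'M[R]_N) <= k * (Lam * N%:R).
Proof.
move=> lL k0; apply: ge_sup.
  exists (- \tr ((lam%:M : 'M[R]_N) *m (- k)%:M)), (lam%:M : 'M[R]_N) => //; split.
    by apply/matrixP => i j; rewrite !mxE eq_sym.
  move=> v; rewrite qform_scalar qform1E.
  by split; [rewrite lexx | apply: ler_wpM2r => //; apply: sqnorm_ge0].
move=> _ [A [_ hA] <-].
rewrite mul_mx_scalar mxtraceZ mulNr opprK ler_wpM2l //.
have -> : Lam * N%:R = \sum_(i < N) Lam by rewrite sumr_const card_ord mulr_natr.
apply: ler_sum => i _; have [_] := hA (delta_mx 0 i).
by rewrite !qform_delta mxE eqxx mulr1n mulr1.
Qed.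

End PucciScalar.

Section Paraboloid.
Variables (R : realType) (N : nat).

Definition paraboloid (c K : R) (x : 'rV[R]_N) : R := c - K * sqnorm x.

Definition coord (i : 'I_N) (y : 'rV[R]_N) : R := y 0 i.

Lemma is_derive_coord (x v : 'rV[R]_N) i : is_derive x v (coord i) (v 0 i).
Proof.
have E : \forall h \near (0 : R)^',
    h^-1 *: ((coord i \o shift x) (h *: v) - x 0 i) = v 0 i.
  rewrite near_withinE; near=> h => hN0.
  by rewrite /coord /= !mxE addrK [_ *: _]mulrA mulVf ?mul1r.
split; first exact: (is_cvg_near_cst (v 0 i) E).
rewrite /derive; exact: (lim_near_cst _ E).
Unshelve. all: by end_near. Qed.

Lemma paraboloidE c K :
  paraboloid c K = cst c - K \*: \sum_i (coord i * coord i).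
Proof.
apply/funext => y; rewrite /paraboloid /= fct_sumE /=.
by congr (_ - _ * _); apply: eq_bigr => i _; rewrite expr2.
Qed.

Lemma is_derive_paraboloid c K x v :
  is_derive x v (paraboloid c K) (- (K * \sum_i (2 * x 0 i * v 0 i))).
Proof.
rewrite paraboloidE.
have hs : is_derive x v (\sum_i (coord i * coord i))
    (\sum_i (coord i x *: v 0 i + coord i x *: v 0 i)).
  by apply: is_derive_sum => i; apply: is_deriveM; exact: is_derive_coord.
apply: (is_derive_eq (is_deriveB (is_derive_cst c x v) (is_deriveZ K hs))).
rewrite sub0r /coord; congr (- _); rewrite /GRing.scale /=; congr (_ * _).
by apply: eq_bigr => i _; rewrite -mulrA mulr2n mulrDl !mul1r.
Qed.

Lemma paraboloid_continuous c K : continuous (paraboloid c K).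
Proof.
move=> x; apply: differentiable_continuous; rewrite paraboloidE.
apply: differentiableB; first exact: differentiable_cst.
apply: differentiableZ; apply: differentiable_sum => i.
by apply: differentiableM; apply: differentiable_coord.
Qed.

Lemma ebasisE (i j : 'I_N) : (ebasis R i) 0 j = (j == i)%:R.
Proof. by rewrite /ebasis mxE eqxx. Qed.

Lemma is_derive_scaled_coord (a : R) i j x :
  is_derive x (ebasis R j) (a \*: coord i) (a * (i == j)%:R).
Proof. by rewrite -ebasisE; apply: is_deriveZ; exact: is_derive_coord. Qed.

Lemma partial_scaled_coord (a : R) i j :
  partial j (a \*: coord i) = fun=> a * (i == j)%:R.
Proof.
apply/funext => x; have h := is_derive_scaled_coord a i j x.
by rewrite /partial derive_val.
Qed.

Lemma partial_paraboloid c K i : partial i (paraboloid c K) = (- (2 * K)) \*: coord i.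
Proof.
apply/funext => x; have h := is_derive_paraboloid c K x (ebasis R i).
rewrite /partial derive_val (bigD1 i) //= big1 ?addr0.
  rewrite ebasisE eqxx mulr1 /GRing.scale /= /coord.
  by rewrite mulNr mulrA [K * 2]mulrC.
by move=> j ji; rewrite ebasisE (negbTE ji) mulr0.
Qed.

Lemma paraboloid_C2 c K : C2 (paraboloid c K).
Proof.
split; first exact: paraboloid_continuous.
split=> [i|i j]; rewrite ?partial_paraboloid.
  split=> [x|].
    by have h := is_derive_paraboloid c K x (ebasis R i); exact: ex_derive.
  move=> x; apply: differentiable_continuous.
  by apply: differentiableZ; exact: differentiable_coord.
split=> [x|].
  by have h := is_derive_scaled_coord (- (2 * K)) i j x; exact: ex_derive.
by rewrite partial_scaled_coord; apply: cst_continuous.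
Qed.

Lemma hessian_paraboloid c K x : hessian (paraboloid c K) x = (- (2 * K))%:M.
Proof.
apply/matrixP => i j.
by rewrite /hessian !mxE partial_paraboloid partial_scaled_coord eq_sym mulr_natr.
Qed.

End Paraboloid.

Section LscMinimum.

(* The sublevel sets {g < inf + e} form a proper filter on A; a
   cluster point p of it satisfies g p <= inf by lower semicontinuity. *)
Lemma lsc_compact_min (R : realType) (T : topologicalType) (g : T -> R)
    (A : set T) (lb : R) :
  compact A -> A !=set0 ->
  (forall x0 (e : R), 0 < e -> \forall x \near x0, g x0 - e < g x) ->
  (forall x, A x -> lb <= g x) ->
  exists2 p, A p & forall x, A x -> g p <= g x.
Proof.
move=> cA [a Aa] lscg glb; set mu := inf (g @` A).
have hinf : has_inf (g @` A).
  by split; [exists (g a), a | exists lb => _ [x Ax <-]; exact: glb].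
pose B (e : R) := A `&` [set x | g x < mu + e].
have FF : Filter (filter_from [set e : R | 0 < e] B).
  apply: filter_from_filter; first by exists 1 => /=.
  move=> i j /= i0 j0; exists (Num.min i j); first by rewrite /= lt_min i0 j0.
  move=> x [Ax gx]; split; split => //=;
    by rewrite (lt_le_trans gx) // lerD2l ge_min lexx ?orbT.
have PF : ProperFilter (filter_from [set e : R | 0 < e] B).
  apply: filter_from_proper => e /= e0.
  by have [_ [x Ax <-] gx] := inf_adherent e0 hinf; exists x.
have FA : filter_from [set e : R | 0 < e] B A by exists 1 => //= x [].
have [p [Ap clp]] := cA _ PF FA.
exists p => // x Ax.
suff : g p <= mu.
  by move/le_trans; apply; apply: ge_inf; [case: hinf | exists x].
rewrite leNgt; apply/negP => mup.
set e := (g p - mu) / 2.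
have e0 : 0 < e by rewrite divr_gt0 // subr_gt0.
have [z [[_ gz1] gz2]] := clp (B e) _ (ex_intro2 _ _ e e0 (fun _ h => h)) (lscg p e e0).
have : g p - e < mu + e by apply: lt_trans gz2 gz1.
by rewrite /e; lra.
Qed.

Variables (R : realType) (N : nat).

Lemma lsc_subr_continuous (u f : 'rV[R]_N -> R) :
  lsc u -> continuous f -> lsc (u \- f).
Proof.
move=> lscu cf x0 e e0; have e20 : 0 < e / 2 by rewrite divr_gt0.
have hf := @cvgr_dist_lt _ _ _ (nbhs x0) (nbhs_filter x0) f (f x0) (cf x0) _ e20.
apply: filterS2 (lscu x0 _ e20) hf => x hu /ltr_normlP [h1 h2] /=; lra.
Qed.

(* The closed cube of half-side s, a compact set containing the ball B_s. *)
Definition cube (s : R) : set 'rV[R]_N :=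
  [set v | forall i, `[- s, s]%classic (v 0 i)].

Lemma cubeP (s : R) (v : 'rV[R]_N) : cube s v <-> forall i, - s <= v 0 i <= s.
Proof. by split => h i; have := h i; rewrite /= in_itv. Qed.

Lemma cube_compact (s : R) : compact (cube s).
Proof.
by apply: (@rV_compact _ _ (fun=> `[- s, s]%classic)) => i; exact: segment_compact.
Qed.

Lemma sqnorm_gt_outside_cube (s : R) (x : 'rV[R]_N) :
  0 <= s -> ~ cube s x -> s ^+ 2 < sqnorm x.
Proof.
move=> s0 nx; have [i hi] : exists i, ~ (- s <= x 0 i <= s).
  by apply/existsNP => h; apply: nx; apply/cubeP.
apply: lt_le_trans (coord_le_sqnorm x i).
by move/negP: hi; rewrite negb_and -!ltNge => /orP [h|h]; nra.
Qed.

Lemma ball_sub_cube (s : R) (x : 'rV[R]_N) :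
  0 <= s -> sqnorm x <= s ^+ 2 -> cube s x.
Proof.
move=> s0 hx; apply/cubeP => i; have := coord_le_sqnorm x i; nra.
Qed.

Lemma lsc_coercive_min (g : 'rV[R]_N -> R) (s lb : R) (y : 'rV[R]_N) :
  0 <= s -> lsc g -> (forall x, lb <= g x) -> sqnorm y <= s ^+ 2 ->
  (forall x, s ^+ 2 < sqnorm x -> g y <= g x) ->
  exists p, forall x, g p <= g x.
Proof.
move=> s0 lscg glb ys gfar.
have yC := ball_sub_cube s0 ys.
have [p _ pmin] := lsc_compact_min (@cube_compact s) (ex_intro _ y yC) lscg
  (fun x _ => glb x).
exists p => x; case: (pselect (cube s x)) => [Cx|nCx]; first exact: pmin.
exact: le_trans (pmin y yC) (gfar x (sqnorm_gt_outside_cube s0 nCx)).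
Qed.

End LscMinimum.

Section MinOverBalls.
Variables (R : realType) (N : nat) (u : 'rV[R]_N -> R).
Hypothesis u_ge0 : forall x, 0 <= u x.

Lemma minball_has_inf r : 0 <= r -> has_inf [set u x | x in [set x | enorm x <= r]].
Proof.
move=> r0; split; first by exists (u 0), 0 => //=; rewrite enorm0.
by exists 0 => _ [x _ <-].
Qed.

Lemma minball_ge0 r : 0 <= r -> 0 <= minball u r.
Proof.
move=> r0; apply: lb_le_inf; first by exists (u 0), 0 => //=; rewrite enorm0.
by move=> _ [x _ <-].
Qed.

Lemma minball_le r x : enorm x <= r -> minball u r <= u x.
Proof. by move=> hx; apply: ge_inf; [exists 0 => _ [y _ <-] | exists x]. Qed.

Lemma minball_adherent r e : 0 <= r -> 0 < e ->
  exists2 x, enorm x <= r & u x < minball u r + e.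
Proof.
move=> r0 e0; have [_ [x hx <-] h] := inf_adherent e0 (minball_has_inf r0).
by exists x.
Qed.

Lemma minball_antimono r s : 0 <= r -> r <= s -> minball u s <= minball u r.
Proof.
move=> r0 rs; apply/ler_addgt0Pr => e e0.
have [x hx hux] := minball_adherent r0 e0.
by apply: le_trans (ltW hux); apply: minball_le; apply: le_trans hx rs.
Qed.

End MinOverBalls.

Section OneStepEstimate.
Variables (R : realType) (N : nat) (lam Lam q : R) (u : 'rV[R]_N -> R).
Hypotheses (lLam : lam <= Lam) (q_gt0 : 0 < q) (u_ge0 : forall x, 0 <= u x).
Hypothesis u_visc : visc_supersol_pucci lam Lam q u.

(* Testing the viscosity inequality with a paraboloid touching u from below
   at p: since D^2 phi = -2K I, u(p)^q <= M^+(-2K I) <= 2K Lam N. *)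
Lemma paraboloid_test (c K : R) (p : 'rV[R]_N) : 0 <= K ->
  (forall x, u p - paraboloid c K p <= u x - paraboloid c K x) ->
  u p `^ q <= 2 * K * (Lam * N%:R).
Proof.
move=> K0 pmin; have [_ visc] := u_visc.
have := visc p _ (paraboloid_C2 N c K) (filterE (nbhs_filter p) pmin).
rewrite hessian_paraboloid subr_ge0 => /le_trans; apply.
by apply: pucci_max_scalar_le; rewrite ?mulr_ge0.
Qed.

(* When m = m(r) > 0 and phi = 4m - (m / r^2)|x|^2, the function u - phi
   attains its global minimum at a point of B_{2r}: it is negative at a point
   of B_r where u < 2m, and nonnegative outside B_{2r}, where phi <= 0. *)
Lemma paraboloid_touching_point (r : R) : 0 < r -> 0 < minball u r ->
  let phi := paraboloid (4 * minball u r) (minball u r / r ^+ 2) in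
  exists2 p, enorm p <= 2 * r & forall x, u p - phi p <= u x - phi x.
Proof.
move=> r0 mpos phi; have [lscu _] := u_visc.
set m := minball u r in mpos phi *; set K := m / r ^+ 2 in phi *.
have K0 : 0 < K by rewrite divr_gt0 ?exprn_gt0.
have Kr : K * r ^+ 2 = m by rewrite /K divfK // gt_eqF ?exprn_gt0.
have K4r : K * (2 * r) ^+ 2 = 4 * m by rewrite -Kr; ring.
pose g := u \- phi.
have [y hy huy] := minball_adherent u_ge0 (ltW r0) mpos.
have ys : sqnorm y <= r ^+ 2 by rewrite -enorm_le //; exact: ltW.
have gy : g y < 0.
  have : K * sqnorm y <= m by rewrite -Kr ler_pM2l.
  by rewrite /g /= /phi /paraboloid; lra.
have gfar x : (2 * r) ^+ 2 <= sqnorm x -> 0 <= g x.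
  move=> hx; have : K * (2 * r) ^+ 2 <= K * sqnorm x by rewrite ler_pM2l.
  by rewrite /g /= /phi /paraboloid K4r; have := u_ge0 x; lra.
have [p pmin] : exists p, forall x, g p <= g x.
  apply: (@lsc_coercive_min _ _ g (2 * r) (- (4 * m)) y).
  - by rewrite mulr_ge0 ?ltW.
  - by apply: lsc_subr_continuous => //; exact: paraboloid_continuous.
  - move=> x; rewrite /g /= /phi /paraboloid.
    by have := u_ge0 x; have := sqnorm_ge0 x; have := ltW K0; nra.
  - by apply: le_trans ys _; have := r0; nra.
  - by move=> x /ltW /gfar; apply: le_trans (ltW gy).
exists p => //; rewrite enorm_le; last by rewrite mulr_ge0 // ltW.
by rewrite leNgt; apply/negP => /ltW /gfar; have := pmin y; lra.
Qed.

(* The one-step estimate m(2r)^q r^2 <= 2 Lam N m(r): trivial if m(r) = 0,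
   otherwise m(2r)^q <= u(p)^q <= 2 (m / r^2) Lam N at the touching point. *)
Lemma minball_doubling (r : R) : 0 < r ->
  minball u (2 * r) `^ q * r `^ 2 <= (2 * (Lam * N%:R)) * minball u r.
Proof.
move=> r0; have r2 : 0 <= 2 * r by rewrite mulr_ge0 ?ltW.
have m2_ge0 := minball_ge0 u_ge0 r2.
have := minball_ge0 u_ge0 (ltW r0); rewrite le_eqVlt => /predU1P[m0|mpos].
  have -> : minball u (2 * r) = 0.
    apply/le_anti; rewrite m2_ge0 m0 (minball_antimono u_ge0 (ltW r0)) //.
    by have := r0; lra.
  by rewrite -m0 mulr0 powR0 ?mul0r // gt_eqF.
set m := minball u r in mpos *.
have r2_gt0 : 0 < r ^+ 2 by rewrite exprn_gt0.
have [p hp pmin] := paraboloid_touching_point r0 mpos.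
have hup := paraboloid_test (ltW (divr_gt0 mpos r2_gt0)) pmin.
have hmq : minball u (2 * r) `^ q <= u p `^ q.
  by apply: ge0_ler_powR; rewrite ?nnegrE ?(ltW q_gt0) ?u_ge0 ?minball_le.
rewrite (powR_mulrn 2 (ltW r0)).
have -> : 2 * (Lam * N%:R) * m = 2 * (m / r ^+ 2) * (Lam * N%:R) * r ^+ 2.
  by field; rewrite gt_eqF.
by apply: ler_wpM2r; [exact: ltW | exact: le_trans hmq hup].
Qed.

End OneStepEstimate.

Section DyadicIteration.
Variable R : realType.

(* If b >= 0 is bounded by M on (0, 1] and b(2r)^q <= E b(r), where M is
   large enough that E M <= M^q, then b <= M everywhere: by induction on n,
   b <= M on (0, 2^n]. *)
Lemma dyadic_bound (b : R -> R) (q E M : R) :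
  0 < q -> 0 <= E -> 0 <= M -> (forall r, 0 < r -> 0 <= b r) ->
  (forall r, 0 < r -> r <= 1 -> b r <= M) ->
  (forall r, 0 < r -> b (2 * r) `^ q <= E * b r) ->
  E * M <= M `^ q ->
  forall r, 0 < r -> b r <= M.
Proof.
move=> q0 E0 M0 b0 b_small b_double EM r r0.
have [n rn] : exists n, r <= 2 ^+ n.
  exists (Num.truncn r).+1; apply: le_trans (ltW (truncnS_gt r)) _.
  by rewrite -natrX ler_nat ltnW // ltn_expl.
elim: n r r0 rn => [|n IH] r r0 rn; first exact: b_small.
have [r1|r1] := leP r 1; first exact: b_small.
have r2 : 0 < r / 2 by rewrite divr_gt0.
have half : b (r / 2) <= M by apply: IH; rewrite // ler_pdivrMr // mulrC -exprS.
have : b r `^ q <= M `^ q.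
  have := b_double _ r2; rewrite mulrC divfK ?pnatr_eq0 // => /le_trans; apply.
  by apply: le_trans EM; exact: ler_wpM2l.
apply: contraTT; rewrite -!ltNge => Mb.
by apply: gt0_ltr_powR; rewrite ?nnegrE ?b0.
Qed.

(* From the doubling inequality m(2r)^q r^2 <= D m(r) for a nonnegative
   bounded m, the rescaled quantity b(r) = m(r) r^(2/(q-1)) satisfies
   b(2r)^q <= D 2^(2q/(q-1)) b(r), so dyadic_bound yields the decay
   m(r) <= C r^(-2/(q-1)). *)
Lemma decay_from_doubling (m : R -> R) (q D m0 : R) :
  1 < q -> 0 <= D -> (forall r, 0 < r -> 0 <= m r) ->
  (forall r, 0 < r -> m r <= m0) ->
  (forall r, 0 < r -> m (2 * r) `^ q * r `^ 2 <= D * m r) ->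
  exists C : R, 0 < C /\ forall r, 0 < r -> m r <= C * r `^ (- (2 / (q - 1))).
Proof.
move=> q1 D0 m_ge0 m_le m_double.
have q10 : q - 1 != 0 by rewrite subr_eq0 gt_eqF.
have q0 : 0 < q by apply: lt_trans q1.
set a := 2 / (q - 1).
have a0 : 0 <= a by rewrite /a divr_ge0 // subr_ge0 ltW.
have aq : a * q = a + 2 by rewrite /a; field.
pose b r := m r * r `^ a.
pose E := D * 2 `^ (a * q).
pose M := Num.max (Num.max m0 1) (E `^ (1 / (q - 1))).
have M1 : 1 <= M by rewrite /M !le_max lexx orbT.
have M0 : 0 <= M by apply: le_trans M1.
have E0 : 0 <= E by rewrite /E mulr_ge0 // powR_ge0.
have b_ge0 r : 0 < r -> 0 <= b r by move=> r0; rewrite mulr_ge0 ?m_ge0 ?powR_ge0.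
have b_small r : 0 < r -> r <= 1 -> b r <= M.
  move=> r0 r1; rewrite /b -[M]mulr1; apply: ler_pM; rewrite ?m_ge0 ?powR_ge0 //.
    by apply: le_trans (m_le _ r0) _; rewrite /M !le_max lexx.
  have -> : 1 = 1 `^ a :> R by rewrite powR1.
  by apply: ge0_ler_powR; rewrite // nnegrE ltW.
have b_double r : 0 < r -> b (2 * r) `^ q <= E * b r.
  move=> r0; rewrite /b powRM ?m_ge0 ?powR_ge0 ?mulr_gt0 //.
  rewrite -powRrM powRM ?ler0n ?(ltW r0) // [X in r `^ X]aq.
  rewrite powRD ?(gt_eqF r0) ?implybT //.
  have -> : m (2 * r) `^ q * (2 `^ (a * q) * (r `^ a * r `^ 2)) =
      2 `^ (a * q) * r `^ a * (m (2 * r) `^ q * r `^ 2) by ring.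
  have -> : E * (m r * r `^ a) = 2 `^ (a * q) * r `^ a * (D * m r) by rewrite /E; ring.
  by apply: ler_wpM2l; [rewrite mulr_ge0 ?powR_ge0 | exact: m_double].
have EM : E * M <= M `^ q.
  rewrite -(mulr_powRB1 M0 q0) mulrC; apply: ler_wpM2l => //.
  have -> : E = (E `^ (1 / (q - 1))) `^ (q - 1) by rewrite -powRrM mul1r mulVf // powRr1.
  apply: ge0_ler_powR; rewrite ?nnegrE ?powR_ge0 ?subr_ge0 ?(ltW q1) //.
  by rewrite /M le_max lexx orbT.
exists M; split; first exact: lt_le_trans M1.
move=> r r0; have ra : 0 < r `^ a by rewrite powR_gt0.
rewrite powRN ler_pdivlMr //.
exact: dyadic_bound q0 E0 M0 b_ge0 b_small b_double EM r r0.
Qed.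

End DyadicIteration.

Unset Implicit Arguments.

Theorem lemma2p4 (R : realType) (N : nat) (lam Lam q : R) (u : 'rV[R]_N -> R) :
  (1 <= N)%N -> 0 < lam -> lam <= Lam ->
  Lam / lam * (N%:R - 1) + 1 > 2 ->
  1 < q ->
  (forall x, 0 <= u x) ->
  visc_supersol_pucci lam Lam q u ->
  exists C : R, 0 < C /\
    forall r : R, 0 < r -> minball u r <= C * r `^ (- (2 / (q - 1))).
Proof.
move=> _ lam0 lLam _ q1 u_ge0 u_visc.
have q0 : 0 < q by apply: lt_trans q1.
apply: (@decay_from_doubling R (minball u) q (2 * (Lam * N%:R)) (u 0)) => //.
- by rewrite !mulr_ge0 // ltW // (lt_le_trans lam0 lLam).
- by move=> r r0; apply: minball_ge0 => //; exact: ltW.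
- by move=> r r0; apply: (minball_le u_ge0 (x := 0)); rewrite enorm0 ltW.
- by move=> r r0; exact: (minball_doubling lLam q0 u_ge0 u_visc r0).
Qed.
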